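(* Let $n\ge 4$, $\bar K>0$, and let $M$ be an $n$-dimensional submanifold of $\mathbb{S}^{n+p}(1/\sqrt{\bar K})$ satisfying $|\mathring A|^2<\mathring a(|H|^2)-\epsilon\omega$ for some $\epsilon>0$, where $\omega=\frac{|H|^2}{n-1}+2n\bar K$. Then the Ricci curvature of $M$ satisfies $\operatorname{Ric}_M\ge\frac{n-1}{n}\epsilon\,\omega>\frac{\epsilon}{n}|H|^2$.
   Context: $A$ is the second fundamental form, $H$ the mean curvature vector, $\mathring A=A-\frac Hn g$. For $x\ge0$: $a(x)=\sqrt{\big(\frac{x}{n-1}+2\bar K\big)^2+(2n-4)\bar K^2}$, $\mathring a(x)=a(x)-\frac xn$. *)

From HB Require Import structures.
From mathcomp Require Import all_boot all_order all_algebra.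
From mathcomp Require Import reals.
Set Implicit Arguments. Unset Strict Implicit. Unset Printing Implicit Defensive.
Import Order.TTheory GRing.Theory Num.Theory.
Local Open Scope ring_scope.

Section Defs.
Variable R : realType.
Variables n p : nat.

(* A point of M is modelled by the second fundamental form in an orthonormal
   tangent frame e_1..e_n and an orthonormal normal frame nu_1..nu_p:
   A(e_i,e_j) = \sum_alpha (A alpha i j) nu_alpha, each A alpha symmetric. *)
Definition sff := 'I_p -> 'M[R]_n.

Definition sff_sym (A : sff) : Prop := forall alpha, (A alpha)^T = A alpha.

Definition meanH (A : sff) (alpha : 'I_p) : R := \tr (A alpha).

Definition normH2 (A : sff) : R := \sum_(alpha < p) (meanH A alpha) ^+ 2.

Definition normAo2 (A : sff) : R :=
  \sum_(alpha < p) \sum_(i < n) \sum_(j < n)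
     (A alpha i j - (i == j)%:R * meanH A alpha / n%:R) ^+ 2.

Definition a_fun (K x : R) : R :=
  Num.sqrt ((x / (n%:R - 1) + 2 * K) ^+ 2 + (2 * n%:R - 4) * K ^+ 2).
Definition ao_fun (K x : R) : R := a_fun K x - x / n%:R.

(* Ricci curvature Ric(v,v) of M in S^{n+p}(1/sqrt K), given by the Gauss
   equation: (n-1) K |v|^2 + <A(v,v), H> - \sum_j |A(v,e_j)|^2. *)
Definition ricci (K : R) (A : sff) (v : 'cV[R]_n) : R :=
  (n%:R - 1) * K * (v^T *m v) 0 0 +
  \sum_(alpha < p) (meanH A alpha * (v^T *m A alpha *m v) 0 0
                     - ((A alpha *m v)^T *m (A alpha *m v)) 0 0).

End Defs.

(* For each normal direction, Cauchy-Schwarz for the Frobenius inner product,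
   applied to (A_alpha v, v) and to (P A_alpha P, P) with P the orthogonal
   projection onto v^perp, bounds the summand below by a quadratic form in
   H_alpha, A°_alpha(v,v) and |A°_alpha|^2.  Summing over alpha, with one more
   Cauchy-Schwarz for sum_alpha H_alpha A°_alpha(v,v), leaves an inequality in
   x = |H|^2 and y = |A°|^2 alone.  Two algebraic properties of the pinching
   function, a(x) <= n K + 2x/n and
   (n-2)^2 x a°(x) <= n (n-1) (n K + 2x/n - a(x))^2,
   turn it into Ric(v) >= (n-1)/n (a°(|H|^2) - |A°|^2). *)
From HB Require Import structures.
From mathcomp Require Import all_boot all_order all_algebra.
From mathcomp Require Import reals.
From mathcomp Require Import ring lra.
Import Order.TTheory GRing.Theory Num.Theory.
Local Open Scope ring_scope.

Section CauchySchwarz.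
Context {R : realFieldType}.

Lemma sum_mul_sqr_le (I : finType) (f g : I -> R) :
  (\sum_i f i * g i) ^+ 2 <= (\sum_i f i ^+ 2) * (\sum_i g i ^+ 2).
Proof.
set F := \sum_i f i ^+ 2; set G := \sum_i g i ^+ 2; set C := \sum_i f i * g i.
have inner i : \sum_j (f i * g j - f j * g i) ^+ 2
    = f i ^+ 2 * G + g i ^+ 2 * F - 2 * (f i * g i) * C.
  rewrite /F /G /C !mulr_sumr -big_split -sumrB /=.
  by apply: eq_bigr => j _; ring.
have lagrange :
    \sum_i \sum_j (f i * g j - f j * g i) ^+ 2 = 2 * (F * G - C ^+ 2).
  rewrite (eq_bigr _ (fun i _ => inner i)) sumrB big_split /= -!mulr_suml.
  by rewrite -mulr_sumr -/F -/G -/C; ring.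
have : 0 <= \sum_i \sum_j (f i * g j - f j * g i) ^+ 2.
  by apply: sumr_ge0 => i _; apply: sumr_ge0 => j _; exact: sqr_ge0.
rewrite lagrange; lra.
Qed.

Lemma mxtrace_mul_tr_sqr_le {m n} (X Y : 'M[R]_(m, n)) :
  \tr (X *m Y^T) ^+ 2 <= \tr (X *m X^T) * \tr (Y *m Y^T).
Proof.
have trE (U V : 'M[R]_(m, n)) :
    \tr (U *m V^T) = \sum_(k : 'I_m * 'I_n) U k.1 k.2 * V k.1 k.2.
  rewrite -(pair_bigA _ (fun i j => U i j * V i j)) /=.
  apply: eq_bigr => i _; rewrite mxE.
  by apply: eq_bigr => j _; rewrite mxE.
rewrite !trE; exact: sum_mul_sqr_le.
Qed.

End CauchySchwarz.

Section UnitVector.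
Context {R : realFieldType} {n : nat} {B : 'M[R]_n} {v : 'cV[R]_n}.
Hypotheses (Bsym : B^T = B) (v_unit : (v^T *m v) 0 0 = 1).

Let vTv : v^T *m v = 1%:M. Proof. by rewrite [LHS]mx11_scalar v_unit. Qed.

Let w := B *m v.
Let q := (v^T *m B *m v) 0 0.
Let r := (w^T *m w) 0 0.

Let trw (u : 'cV[R]_n) : \tr (w *m u^T) = (u^T *m w) 0 0.
Proof. by rewrite mxtrace_mulC trace_mx11. Qed.

Lemma quad_sqr_le : q ^+ 2 <= r.
Proof.
have := mxtrace_mul_tr_sqr_le w v.
by rewrite !trw mxtrace_mulC trace_mx11 v_unit mulr1 mulmxA.
Qed.

Let P : 'M[R]_n := 1%:M - v *m v^T.

Lemma trace_compl_sqr_le :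
  (\tr B - q) ^+ 2 <= (n%:R - 1) * (\tr (B *m B^T) - 2 * r + q ^+ 2).
Proof.
have PT : P^T = P by rewrite /P linearB /= trmx1 trmx_mul trmxK.
have PP : P *m P = P.
  rewrite /P mulmxBl !mulmxBr !mul1mx mulmx1 mulmxA -(mulmxA v) vTv mulmx1.
  by rewrite subrr subr0.
have trP : \tr P = n%:R - 1.
  by rewrite /P linearB /= mxtrace1 mxtrace_mulC vTv trace_mx11 mxE.
have BP : B *m P = B - w *m v^T by rewrite /P mulmxBr mulmx1 mulmxA.
have wT : w^T = v^T *m B by rewrite /w trmx_mul Bsym.
have trBP : \tr (B *m P) = \tr B - q by rewrite BP linearB /= trw mulmxA.
have trBPBP : \tr (B *m P *m (B *m P)) = \tr (B *m B^T) - 2 * r + q ^+ 2.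
  rewrite BP mulmxBl !mulmxBr !linearB /= Bsym.
  have trBwv : \tr (B *m (w *m v^T)) = r.
    by rewrite mulmxA mxtrace_mulC mulmxA -wT trace_mx11.
  have trwvB : \tr (w *m v^T *m B) = r by rewrite mxtrace_mulC trBwv.
  have vw : v^T *m w = q%:M by rewrite mulmxA [LHS]mx11_scalar.
  have trwvwv : \tr (w *m v^T *m (w *m v^T)) = q ^+ 2.
    rewrite mulmxA -(mulmxA w) vw mul_mx_scalar -scalemxAl linearZ /= trw vw.
    by rewrite mxE mulr1n expr2.
  by rewrite trBwv trwvB trwvwv; ring.
set N := P *m B *m P.
have NT : N^T = N by rewrite /N !trmx_mul PT Bsym mulmxA.
have NP : N *m P = N by rewrite /N -mulmxA PP.
have trN : \tr N = \tr B - q by rewrite /N -mulmxA mxtrace_mulC -mulmxA PP trBP.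
have trNN : \tr (N *m N) = \tr (B *m B^T) - 2 * r + q ^+ 2.
  rewrite /N -!mulmxA (mulmxA P P) PP mxtrace_mulC -!mulmxA PP -trBPBP.
  by rewrite -!mulmxA.
have := mxtrace_mul_tr_sqr_le N P.
by rewrite PT NT NP PP trN trP trNN mulrC.
Qed.

Hypothesis n_gt1 : (1 < n)%N.

Let n_gt1R : 1 < n%:R :> R. Proof. by rewrite ltr1n. Qed.
Let n_neq0 : n%:R != 0 :> R. Proof. by rewrite gt_eqF // (lt_trans ltr01). Qed.
Let n1_neq0 : n%:R - 1 != 0 :> R. Proof. by rewrite gt_eqF // subr_gt0. Qed.

Let b := q - \tr B / n%:R.
Let y := \tr (B *m B^T) - \tr B ^+ 2 / n%:R.
Let defect := \tr (B *m B^T) - 2 * r + q ^+ 2 - (\tr B - q) ^+ 2 / (n%:R - 1).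

Let defect_ge0 : 0 <= defect.
Proof.
rewrite subr_ge0 ler_pdivrMr ?subr_gt0 // mulrC; exact: trace_compl_sqr_le.
Qed.

Lemma ricci_term_ge :
  (n%:R - 1) / n%:R ^+ 2 * \tr B ^+ 2 + (n%:R - 2) / n%:R * (\tr B * b) - y / 2
    - (n%:R - 2) / (2 * (n%:R - 1)) * b ^+ 2 <= \tr B * q - r.
Proof.
rewrite -subr_ge0 (_ : _ - _ = defect / 2).
  by apply: divr_ge0 => //; exact: defect_ge0.
by rewrite /defect /b /y; field; rewrite n_neq0 n1_neq0.
Qed.

Lemma quad_traceless_sqr_le : b ^+ 2 <= (n%:R - 1) / n%:R * y.
Proof.
rewrite -subr_ge0 (_ : _ - _ = (n%:R - 1) / n%:R * (2 * (r - q ^+ 2) + defect)).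
  apply: mulr_ge0; first by apply: divr_ge0; have := n_gt1R; lra.
  by have := quad_sqr_le; have := defect_ge0; lra.
by rewrite /defect /b /y; field; rewrite n_neq0 n1_neq0.
Qed.

End UnitVector.
Section PinchingRoot.
Context {R : realFieldType} {N K x a : R}.

Let pinch_sqr := (x / (N - 1) + 2 * K) ^+ 2 + (2 * N - 4) * K ^+ 2.
Let bound := N * K + 2 * x / N.

Lemma pinch_root_le : 4 <= N -> 0 <= K -> 0 <= x -> 0 <= a ->
  a ^+ 2 = pinch_sqr -> a <= bound.
Proof.
move=> N_ge4 K_ge0 x_ge0 a_ge0 a_sqr.
have N_neq0 : N != 0 by rewrite gt_eqF //; lra.
have N1_neq0 : N - 1 != 0 by rewrite gt_eqF //; lra.
have bound_ge0 : 0 <= bound by apply: addr_ge0; [nra | apply: divr_ge0; lra].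
suff : a ^+ 2 <= bound ^+ 2 by nra.
have -> : bound ^+ 2 = a ^+ 2 + ((N ^+ 2 - 2 * N) * K ^+ 2
    + 4 * x * K * ((N - 2) / (N - 1))
    + x ^+ 2 * ((3 * N ^+ 2 - 8 * N + 4) / (N ^+ 2 * (N - 1) ^+ 2))).
  by rewrite /bound a_sqr /pinch_sqr; field; rewrite N_neq0 N1_neq0.
rewrite lerDl; apply: addr_ge0; first apply: addr_ge0.
- by apply: mulr_ge0; nra.
- by apply: mulr_ge0; [nra | apply: divr_ge0; lra].
- by apply: mulr_ge0; [nra | apply: divr_ge0; nra].
Qed.

Lemma pinch_root_gap : 4 <= N -> 0 <= K -> 0 <= x -> 0 <= a ->
  a ^+ 2 = pinch_sqr ->
  (N - 2) ^+ 2 * x * (a - x / N) <= N * (N - 1) * (bound - a) ^+ 2.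
Proof.
move=> N_ge4 K_ge0 x_ge0 a_ge0 a_sqr.
have N_neq0 : N != 0 by rewrite gt_eqF //; lra.
have N1_neq0 : N - 1 != 0 by rewrite gt_eqF //; lra.
have bound_ge0 : 0 <= bound by apply: addr_ge0; [nra | apply: divr_ge0; lra].
set P := N * (N - 1) * (bound ^+ 2 + pinch_sqr) + (N - 2) ^+ 2 * x ^+ 2 / N.
set Q := 2 * N * (N - 1) * bound + (N - 2) ^+ 2 * x.
have P_ge0 : 0 <= P.
  apply: addr_ge0; last by apply: divr_ge0; nra.
  by apply: mulr_ge0; [nra | rewrite -a_sqr; apply: addr_ge0; exact: sqr_ge0].
have Qa_ge0 : 0 <= Q * a.
  by apply: mulr_ge0 => //; apply: addr_ge0; apply: mulr_ge0 => //; nra.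
(* The claim is [Q a <= P], whose square holds because [P^2 - Q^2 a^2] is a
   perfect square. *)
have discr :
    P ^+ 2 - Q ^+ 2 * pinch_sqr = (N ^+ 2 * (N - 1) * (N - 2)) ^+ 2 * K ^+ 4.
  by rewrite /P /Q /pinch_sqr /bound; field; rewrite N_neq0 N1_neq0.
have : (Q * a) ^+ 2 <= P ^+ 2.
  rewrite exprMn a_sqr -subr_ge0 discr.
  by apply: mulr_ge0; apply: exprn_ge0; [nra | lra].
move=> Qa_le_P; rewrite -subr_ge0 (_ : _ - _ = P - Q * a); first by nra.
by rewrite /P /Q -a_sqr; field.
Qed.

Lemma pinching_estimate {y T Z Sum : R} :
  4 <= N -> 0 <= K -> 0 <= x -> 0 <= a -> a ^+ 2 = pinch_sqr ->
  y <= a - x / N -> T <= (N - 1) / N * y -> Z ^+ 2 <= x * T ->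
  (N - 1) / N ^+ 2 * x + (N - 2) / N * Z - y / 2 - (N - 2) / (2 * (N - 1)) * T
    <= Sum ->
  (N - 1) / N * (a - x / N - y) <= (N - 1) * K + Sum.
Proof.
move=> N_ge4 K_ge0 x_ge0 a_ge0 a_sqr y_le T_le Z_sqr_le Sum_ge.
have N_neq0 : N != 0 by rewrite gt_eqF //; lra.
have N1_neq0 : N - 1 != 0 by rewrite gt_eqF //; lra.
have N2_neq0 : N - 2 != 0 by rewrite gt_eqF //; lra.
have gap_ge0 : 0 <= bound - a by rewrite subr_ge0; exact: pinch_root_le.
have gap := pinch_root_gap N_ge4 K_ge0 x_ge0 a_ge0 a_sqr.
set E := (N - 1) / (N - 2) * (bound - a).
have E_ge0 : 0 <= E by apply: mulr_ge0 => //; apply: divr_ge0; lra.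
have Z_ge : - E <= Z.
  suff : Z ^+ 2 <= E ^+ 2 by nra.
  apply: (le_trans Z_sqr_le).
  apply: (@le_trans _ _ (x * ((N - 1) / N * (a - x / N)))).
    apply: ler_wpM2l => //; apply: (le_trans T_le); apply: ler_wpM2l => //.
    by apply: divr_ge0; lra.
  have -> : E ^+ 2
      = (N - 1) / (N * (N - 2) ^+ 2) * (N * (N - 1) * (bound - a) ^+ 2).
    by rewrite /E; field; rewrite N_neq0 N2_neq0.
  have -> : x * ((N - 1) / N * (a - x / N))
      = (N - 1) / (N * (N - 2) ^+ 2) * ((N - 2) ^+ 2 * x * (a - x / N)).
    by field; rewrite N_neq0 N2_neq0.
  by apply: ler_wpM2l => //; apply: divr_ge0; nra.
have Z_term : - ((N - 1) / N * (bound - a)) <= (N - 2) / N * Z.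
  have -> : - ((N - 1) / N * (bound - a)) = (N - 2) / N * (- E).
    by rewrite /E; field; rewrite N_neq0 N2_neq0.
  by apply: ler_wpM2l => //; apply: divr_ge0; lra.
have T_term : (N - 2) / (2 * (N - 1)) * T <= (N - 2) / (2 * N) * y.
  have -> : (N - 2) / (2 * N) * y = (N - 2) / (2 * (N - 1)) * ((N - 1) / N * y).
    by field; rewrite N_neq0 N1_neq0.
  by apply: ler_wpM2l => //; apply: divr_ge0; lra.
have -> : (N - 1) / N * (a - x / N - y) = (N - 1) * K + ((N - 1) / N ^+ 2 * x
    - (N - 1) / N * (bound - a) - y / 2 - (N - 2) / (2 * N) * y).
  by rewrite /bound; field; rewrite N_neq0.
lra.
Qed.

End PinchingRoot.

Lemma traceless_norm_sqr (R : realFieldType) n (B : 'M[R]_n) : (0 < n)%N ->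
  \sum_(i < n) \sum_(j < n) (B i j - (i == j)%:R * \tr B / n%:R) ^+ 2
    = \tr (B *m B^T) - \tr B ^+ 2 / n%:R.
Proof.
move=> n_gt0; set s := \tr B / n%:R.
have -> : \sum_(i < n) \sum_(j < n) (B i j - (i == j)%:R * \tr B / n%:R) ^+ 2
    = \tr ((B - s%:M) *m (B - s%:M)^T).
  apply: eq_bigr => i _; rewrite mxE; apply: eq_bigr => j _.
  by rewrite !mxE -mulrA mulr_natl expr2.
rewrite linearB /= tr_scalar_mx mulmxBl !mulmxBr mul_mx_scalar !mul_scalar_mx.
rewrite !linearB !linearZ /= mxtrace_tr mxtrace_scalar /s -mulr_natr.
field; by rewrite pnatr_eq0 -lt0n.
Qed.

Lemma ricci_ge_pinching_defect {R : realType} {n p : nat} {K : R}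
    {A : sff R n p} {v : 'cV[R]_n} :
  (4 <= n)%N -> 0 <= K -> sff_sym A -> (v^T *m v) 0 0 = 1 ->
  normAo2 A <= ao_fun n K (normH2 A) ->
  (n%:R - 1) / n%:R * (ao_fun n K (normH2 A) - normAo2 A) <= ricci K A v.
Proof.
move=> n_ge4 K_ge0 Asym v_unit pinched.
have n_gt1 : (1 < n)%N by apply: leq_trans n_ge4.
have N_ge4 : 4 <= n%:R :> R by rewrite ler_nat.
have x_ge0 : 0 <= normH2 A by apply: sumr_ge0 => α _; exact: sqr_ge0.
have a_sqr : a_fun n K (normH2 A) ^+ 2
    = (normH2 A / (n%:R - 1) + 2 * K) ^+ 2 + (2 * n%:R - 4) * K ^+ 2.
  rewrite sqr_sqrtr //; apply: addr_ge0; first exact: sqr_ge0.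
  by apply: mulr_ge0; [lra | exact: sqr_ge0].
have normAo2E : normAo2 A
    = \sum_(α < p) (\tr (A α *m (A α)^T) - meanH A α ^+ 2 / n%:R).
  by apply: eq_bigr => α _; rewrite traceless_norm_sqr // ltnW.
pose b α := (v^T *m A α *m v) 0 0 - meanH A α / n%:R.
have T_le : \sum_α b α ^+ 2 <= (n%:R - 1) / n%:R * normAo2 A.
  rewrite normAo2E mulr_sumr; apply: ler_sum => α _.
  exact: quad_traceless_sqr_le (Asym α) v_unit n_gt1.
have Z_le : (\sum_α meanH A α * b α) ^+ 2 <= normH2 A * \sum_α b α ^+ 2.
  exact: sum_mul_sqr_le.
rewrite /ricci v_unit mulr1.
apply: (pinching_estimate N_ge4 K_ge0 x_ge0 (sqrtr_ge0 _) a_sqr pinched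
  T_le Z_le).
rewrite normAo2E /normH2 !mulr_sumr mulr_suml -big_split -!sumrB.
apply: ler_sum => α _; exact: ricci_term_ge (Asym α) v_unit n_gt1.
Qed.

Theorem mainTheorem10 (R : realType) (n p : nat) (K eps : R)
  (A : sff R n p) :
  (4 <= n)%N -> 0 < K -> 0 < eps -> sff_sym A ->
  let omega := normH2 A / (n%:R - 1) + 2 * n%:R * K in
  normAo2 A < ao_fun n K (normH2 A) - eps * omega ->
  (forall v : 'cV[R]_n, (v^T *m v) 0 0 = 1 ->
     (n%:R - 1) / n%:R * eps * omega <= ricci K A v) /\
  (n%:R - 1) / n%:R * eps * omega > eps / n%:R * normH2 A.
Proof.
move=> n_ge4 K_gt0 eps_gt0 Asym omega pinched.
have n_gt1 : 1 < n%:R :> R by rewrite ltr1n (leq_trans _ n_ge4).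
have x_ge0 : 0 <= normH2 A by apply: sumr_ge0 => α _; exact: sqr_ge0.
have omega_gt0 : 0 < omega.
  by apply: ltr_wpDl; [apply: divr_ge0; lra | apply: mulr_gt0; lra].
split=> [v v_unit|].
  have pinched_le : normAo2 A <= ao_fun n K (normH2 A).
    by have := mulr_gt0 eps_gt0 omega_gt0; lra.
  apply: le_trans
    (ricci_ge_pinching_defect n_ge4 (ltW K_gt0) Asym v_unit pinched_le).
  by rewrite -mulrA; apply: ler_wpM2l; [apply: divr_ge0 |]; lra.
have -> : (n%:R - 1) / n%:R * eps * omega
    = eps / n%:R * normH2 A + 2 * (n%:R - 1) * eps * K.
  by rewrite /omega; field; apply/andP; split; rewrite gt_eqF //; lra.
by rewrite ltrDl !mulr_gt0 //; lra.
Qed.
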